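(* Let $\mathcal P=[p_1,\ldots,p_k]\in AP_{n,k}$. If $\mathrm{slack}(\mathcal P)<0$, then there is an index $j<k$ such that $p_j<p_{j+1}$ and $\mathrm{slack}(\mathcal P)=\mathrm{slack}_j(\mathcal P)$.
   Context: $s^{n,k}=\frac{n(n+1)}{2k}$. An ascending partition of $n$ of size $k$ is a sequence of positive integers $[p_1,\ldots,p_k]$ with $p_1\le\cdots\le p_k$ and $\sum_i p_i=n$; $AP_{n,k}$ is the set of all such partitions when $s^{n,k}$ is an integer (and empty otherwise). For $j=1,\ldots,k$, $\mathrm{slack}_j(\mathcal P)=\sum_{i=1}^{p_1+\cdots+p_j}(n-i+1)-j\,s^{n,k}$, and $\mathrm{slack}(\mathcal P)=\min_{1\le j\le k-1}\mathrm{slack}_j(\mathcal P)$. *)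

From mathcomp Require Import all_boot all_order all_algebra.
Set Implicit Arguments. Unset Strict Implicit. Unset Printing Implicit Defensive.
Import Order.TTheory GRing.Theory Num.Theory.

(* A partition is a seq nat [p_1; ...; p_k]; p_j = nth 0 P (j-1). *)

(* s^{n,k} = n(n+1)/(2k); only used when 2k divides n(n+1). *)
Definition snk (n k : nat) : nat := (n * n.+1) %/ (2 * k).

Definition isAP (n k : nat) (P : seq nat) : bool :=
  [&& 0 < k, size P == k, sorted leq P, all (fun x => 0 < x) P,
      sumn P == n & (2 * k %| n * n.+1)].

Definition slack_j (n k : nat) (P : seq nat) (j : nat) : int :=
  ((\sum_(1 <= i < (sumn (take j P)).+1) (n.+1 - i)%N)%:Z - (j * snk n k)%:Z)%R.

(* slack(P) = min_{1 <= j <= k-1} slack_j(P).  For k <= 1 the minimum is over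
   an empty range; we use the convention value 0 (never negative). *)
Definition slack (n k : nat) (P : seq nat) : int :=
  match [seq slack_j n k P j | j <- iota 1 k.-1] with
  | [::] => 0%R
  | x :: s => foldl Num.min x s
  end.

From mathcomp Require Import all_boot all_order all_algebra zify.
Set Implicit Arguments. Unset Strict Implicit. Unset Printing Implicit Defensive.
Import Order.TTheory GRing.Theory Num.Theory.

(* The increment slack_{j+1} - slack_j is the sum of the p_{j+1} consecutive
   values of n - i + 1 following position p_1 + ... + p_j, minus s^{n,k}.  These
   values decrease with i, so the increment can only grow where p_{j+1} > p_j.
   Since slack_0 = slack_k = 0, a negative minimum of j |-> slack_j has a last
   occurrence j < k, where the increment strictly grows; hence p_j < p_{j+1}. *)

Definition sum_top (n m : nat) : nat := \sum_(1 <= i < m.+1) (n.+1 - i).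

Lemma sum_topE n m : m <= n.+1 -> 2 * sum_top n m + m * m.+1 = 2 * m * n.+1.
Proof.
rewrite /sum_top; elim: m => [|m IH] le_m; first by rewrite big_geq.
rewrite big_nat_recr //=; have := IH (ltnW le_m); nia.
Qed.

Lemma sum_top_midpoint n b p q : b + p + q <= n -> q <= p ->
  sum_top n (b + p + q) + sum_top n b <= 2 * sum_top n (b + p).
Proof.
move=> le_n le_qp.
have E1 := @sum_topE n b ltac:(lia).
have E2 := @sum_topE n (b + p) ltac:(lia).
have E3 := @sum_topE n (b + p + q) ltac:(lia).
have [r Er] : exists r, n = b + p + q + r by exists (n - (b + p + q)); lia.
have [t Et] : exists t, p = q + t by exists (p - q); lia.
rewrite Er Et in E1 E2 E3 *; nia.
Qed.

Lemma sumn_take_nth (s : seq nat) i :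
  sumn (take i.+1 s) = sumn (take i s) + nth 0 s i.
Proof.
have [lt_i_s|le_s_i] := ltnP i (size s).
  by rewrite (take_nth 0 lt_i_s) -cats1 sumn_cat /= addn0.
by rewrite !take_oversize ?nth_default ?addn0 // ltnW.
Qed.

Lemma sumn_take_le (s : seq nat) i : sumn (take i s) <= sumn s.
Proof. by rewrite -{2}(cat_take_drop i s) sumn_cat leq_addr. Qed.

Lemma foldl_min_mem d (T : orderType d) (x : T) s : foldl Order.min x s \in x :: s.
Proof.
elim: s x => [|y s IH] x /=; first exact: mem_head.
have := IH (Order.min x y); rewrite !inE => /orP[/eqP->|->]; last by rewrite !orbT.
by rewrite minEle; case: ifP; rewrite eqxx ?orbT.
Qed.

Lemma foldl_min_le d (T : orderType d) (x : T) s y :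
  y \in x :: s -> (foldl Order.min x s <= y)%O.
Proof.
elim: s x y => [|z s IH] x y /=; first by rewrite inE => /eqP->.
have le_min_foldl := IH _ _ (mem_head (Order.min x z) s).
rewrite !inE => /or3P[/eqP->|/eqP->|y_s].
- by rewrite (le_trans le_min_foldl) ?ge_min ?lexx.
- by rewrite (le_trans le_min_foldl) ?ge_min ?lexx ?orbT.
- by apply: IH; rewrite inE y_s orbT.
Qed.

Section Slack.

Variables (n k : nat) (P : seq nat).

Lemma slack_j0 : slack_j n k P 0 = 0%R.
Proof. by rewrite /slack_j take0 big_geq. Qed.

Lemma slack_jk : isAP n k P -> slack_j n k P k = 0%R.
Proof.
case/and5P=> _ /eqP size_P _ _ /andP[/eqP sum_P dvd_k].
rewrite /slack_j take_oversize ?size_P // sum_P -/(sum_top n n) /snk.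
have := sum_topE (leqnSn n); have := divnK dvd_k; set s := _ %/ _; nia.
Qed.

Lemma slack_j_concave i : sumn P <= n -> nth 0 P i.+1 <= nth 0 P i ->
  (slack_j n k P i.+2 - slack_j n k P i.+1 <=
   slack_j n k P i.+1 - slack_j n k P i)%R.
Proof.
move=> sum_P le_pq.
have := sumn_take_le P i.+2; rewrite !sumn_take_nth => le_n.
have := @sum_top_midpoint n (sumn (take i P)) (nth 0 P i) (nth 0 P i.+1).
rewrite /slack_j /sum_top !sumn_take_nth; lia.
Qed.

Lemma slack_attained : (slack n k P < 0)%R ->
  exists2 j, 1 <= j < k & slack n k P = slack_j n k P j.
Proof.
rewrite /slack; case E: [seq _ | _ <- _] => [//|x s] _.
have /mapP[j] : foldl Num.min x s \in [seq slack_j n k P j | j <- iota 1 k.-1].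
  by rewrite E foldl_min_mem.
by rewrite mem_iota => j_k ->; exists j => //; lia.
Qed.

Lemma slack_le j : 1 <= j < k -> (slack n k P <= slack_j n k P j)%R.
Proof.
move=> j_k; rewrite /slack; case E: [seq _ | _ <- _] => [|x s].
  by move/(congr1 size): E; rewrite size_map size_iota /=; lia.
apply: foldl_min_le; rewrite -E; apply: map_f; rewrite mem_iota; lia.
Qed.

End Slack.

Lemma argmin_strictly_convex (f : nat -> int) k m j0 :
  (forall j, j <= k -> (m <= f j)%R) -> (m < f k)%R -> j0 < k -> f j0 = m ->
  exists j, [/\ j0 <= j < k, f j = m & (f j - f j.-1 < f j.+1 - f j)%R].
Proof.
move=> f_ge f_k; have [d] : exists d, k - j0 = d by eexists.
elim: d j0 => [|d IH] j0 Ed lt_j0k fj0; first lia.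
have fj0_prev := f_ge j0.-1 ltac:(lia).
have [lt_m_next|ge_m_next] := ltrP m (f j0.+1).
  by exists j0; split => //; lia.
have fj1 : f j0.+1 = m by apply/eqP; rewrite eq_le ge_m_next f_ge.
have lt_j1k : j0.+1 < k.
  by rewrite ltn_neqAle lt_j0k andbT; apply: contraTneq f_k => <-; rewrite fj1 ltxx.
have [j [/andP[le_j1j lt_jk] fj conv]] := IH j0.+1 ltac:(lia) lt_j1k fj1.
by exists j; split => //; rewrite (ltnW le_j1j).
Qed.

Theorem mainTheorem6 (n k : nat) (P : seq nat) :
  isAP n k P -> (slack n k P < 0)%R ->
  exists j : nat, [/\ 1 <= j < k, nth 0 P j.-1 < nth 0 P j
                    & slack n k P = slack_j n k P j].
Proof.
move=> AP_P slack_neg; have /and5P[_ _ _ _ /andP[/eqP sum_P _]] := AP_P.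
have [j0 /andP[j0_pos lt_j0k] slack_at_j0] := slack_attained slack_neg.
have slack_ge j : j <= k -> (slack n k P <= slack_j n k P j)%R.
  have [-> _|j_pos] := posnP j; first by rewrite slack_j0 ltW.
  rewrite leq_eqVlt => /predU1P[->|lt_jk]; first by rewrite slack_jk // ltW.
  by apply: slack_le; rewrite j_pos.
have [|j [/andP[le_j0j lt_jk] slack_at_j steeper]] :=
  argmin_strictly_convex slack_ge _ lt_j0k (esym slack_at_j0).
  by rewrite slack_jk.
case: j le_j0j lt_jk slack_at_j steeper => [|i]; first by rewrite leqNgt j0_pos.
move=> _ lt_ik slack_at_j steeper; exists i.+1; split => //.
rewrite ltnNge; apply: contraTN steeper => le_next.
by rewrite -leNgt slack_j_concave // sum_P.
Qed.
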